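(* For every set $X$, $\mathrm{Aut}(\mathcal{PI}^{\ast}_X)\cong\mathcal{S}_X$. Moreover, for every automorphism $\varphi$ of $\mathcal{PI}^{\ast}_X$ there is $\pi\in\mathcal{S}_X$ such that $\varphi(a)=\pi^{-1}\star a\star\pi$ for all $a\in\mathcal{PI}^{\ast}_X$.
   Context: Let $X'=\{x':x\in X\}$ be a disjoint copy of $X$. $\mathcal{PI}^{\ast}_X$ is the set of partitions of $X\cup X'$ each of whose blocks is a singleton (point) or a generalised line (a set meeting both $X$ and $X'$), with product $\star$: with $X''$ a third copy of $X$, regard $\alpha$ as a partition of $X\cup X''$ and $\beta$ as a partition of $X''\cup X'$, let $\sim$ be the equivalence on $X\cup X''\cup X'$ generated by the blocks of both; $\alpha\star\beta$ is the partition of $X\cup X'$ in which distinct $u,v$ are in one block iff $u\sim v$ and the $\sim$-class of $u$ contains no singleton block of $\alpha$ or $\beta$. $\mathcal{S}_X$ is its group of units: elements all of whose blocks are $\{x,\pi(x)'\}$ for a permutation $\pi$ of $X$ (identified with the symmetric group on $X$). $\mathrm{Aut}$ denotes the automorphism group. *)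

(* Partitions of X ∪ X' are modelled as equivalence relations
   on the type X + X  (inl x = x, inr x = x'). *)
From Stdlib Require Import Relations.

Set Implicit Arguments.

Definition Rel (X : Type) := X + X -> X + X -> Prop.

Definition singleton_block (X : Type) (a : Rel X) (u : X + X) : Prop :=
  forall v, a u v -> v = u.

Definition PIstar (X : Type) (a : Rel X) : Prop :=
  equivalence (X + X) a /\
  forall u, singleton_block a u \/
            ((exists x, a u (inl x)) /\ (exists y, a u (inr y))).

(* X ∪ X'' ∪ X'  is  X + (X + X) : inl x = x, inr (inl x) = x'', inr (inr x) = x' *)
Definition emb_l (X : Type) (u : X + X) : X + (X + X) :=
  match u with inl x => inl x | inr x => inr (inl x) end.
Definition emb_r (X : Type) (u : X + X) : X + (X + X) :=
  match u with inl x => inr (inl x) | inr x => inr (inr x) end.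
Definition emb_o (X : Type) (u : X + X) : X + (X + X) :=
  match u with inl x => inl x | inr x => inr (inr x) end.

Definition step (X : Type) (a b : Rel X) (p q : X + (X + X)) : Prop :=
  (exists u v, p = emb_l u /\ q = emb_l v /\ a u v) \/
  (exists u v, p = emb_r u /\ q = emb_r v /\ b u v).

Definition gen (X : Type) (a b : Rel X) : X + (X + X) -> X + (X + X) -> Prop :=
  clos_refl_sym_trans _ (step a b).

Definition sing_point (X : Type) (a b : Rel X) (w : X + (X + X)) : Prop :=
  (exists s, w = emb_l s /\ singleton_block a s) \/
  (exists s, w = emb_r s /\ singleton_block b s).

Definition star (X : Type) (a b : Rel X) : Rel X :=
  fun u v => u = v \/
    (gen a b (emb_o u) (emb_o v) /\
     forall w, gen a b (emb_o u) w -> ~ sing_point a b w).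

Definition perm_rel (X : Type) (f : X -> X) : Rel X :=
  fun u v => u = v \/
    (exists x, (u = inl x /\ v = inr (f x)) \/ (u = inr (f x) /\ v = inl x)).

Definition in_SX (X : Type) (r : Rel X) : Prop :=
  exists f g : X -> X,
    (forall x, g (f x) = x) /\ (forall x, f (g x) = x) /\ r = perm_rel f.

(* automorphisms of (PI*_X, star); maps are compared on PI*_X only *)
Definition is_aut (X : Type) (phi : Rel X -> Rel X) : Prop :=
  (forall a, PIstar a -> PIstar (phi a)) /\
  (forall a b, PIstar a -> PIstar b -> phi a = phi b -> a = b) /\
  (forall b, PIstar b -> exists a, PIstar a /\ phi a = b) /\
  (forall a b, PIstar a -> PIstar b -> phi (star a b) = star (phi a) (phi b)).

Definition agree_on_PI (X : Type) (phi psi : Rel X -> Rel X) : Prop :=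
  forall a, PIstar a -> phi a = psi a.

From Stdlib Require Import Relations Classical ClassicalEpsilon FunctionalExtensionality PropExtensionality.

(* Write [line A C] for the element whose only generalised line is A ∪ C'. These elements are
   characterised algebraically (w ≠ 0 and w ⋆ b ⋆ w ∈ {0, w} for every b), so an automorphism φ
   permutes them, and since line A C ⋆ line C D = line A D it acts as
   φ (line A C) = line (σ A) (σ C) for a bijection σ of the nonempty subsets of X. Inclusion of
   subsets can also be expressed through ⋆ and lines, so σ preserves it; hence σ maps singletons
   to singletons and is induced by a permutation π of X. Finally an element a is determined by the
   products a ⋆ line C C, each of which is 0 or a line; comparing these products for φ a and for
   the relabelling of a by π shows that φ a is this relabelling, that is, π⁻¹ ⋆ a ⋆ π. *)

Lemma pred_ext {T : Type} (P Q : T -> Prop) : (forall x, P x <-> Q x) -> P = Q.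
Proof.
  intros H; apply functional_extensionality; intros x; apply propositional_extensionality; auto.
Qed.

Section PIstar.
Context {X : Type}.
Implicit Types (a b z : Rel X) (A C D E F : X -> Prop) (u v : X + X) (p q : X + (X + X)).

Lemma rel_ext a b : (forall u v, a u v <-> b u v) -> a = b.
Proof.
  intros H; apply functional_extensionality; intros u; apply pred_ext; auto.
Qed.

Definition zero_rel : Rel X := fun u v => u = v.
Definition nonempty A := exists x, A x.
Definition in_line A C u := match u with inl x => A x | inr y => C y end.

Definition line A C : Rel X := fun u v => u = v \/ (in_line A C u /\ in_line A C v).

(* C' is a nonempty union of X'-parts of lines of z. *)
Definition saturated z C : Prop :=
  nonempty C /\
  forall y, C y -> (exists x, z (inr y) (inl x)) /\ (forall y2, z (inr y) (inr y2) -> C y2).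

Definition left_trace z C : X -> Prop := fun x => exists y, C y /\ z (inl x) (inr y).

Definition avoids_points a b p : Prop := forall w, gen a b p w -> ~ sing_point a b w.

Lemma PI_refl a : PIstar a -> forall u, a u u.
Proof. intros [[R _ _] _]; exact R. Qed.

Lemma PI_sym a : PIstar a -> forall u v, a u v -> a v u.
Proof. intros [[_ _ S] _]; exact S. Qed.

Lemma PI_trans a : PIstar a -> forall u v w, a u v -> a v w -> a u w.
Proof. intros [[_ T _] _]; exact T. Qed.

Lemma PI_line a : PIstar a -> forall u, ~ singleton_block a u ->
  (exists x, a u (inl x)) /\ (exists y, a u (inr y)).
Proof. intros [_ H] u N; destruct (H u); tauto. Qed.

Lemma PI_line_of a : PIstar a -> forall u v, a u v -> u <> v ->
  (exists x, a u (inl x)) /\ (exists y, a u (inr y)).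
Proof.
  intros Ha u v Huv N; apply (PI_line a Ha); intros S; apply N; symmetry; apply S; auto.
Qed.

Lemma not_singleton_block a u : ~ singleton_block a u -> exists v, a u v /\ v <> u.
Proof.
  intros N; apply NNPP; intros H; apply N; intros v Hv; apply NNPP; intros H2; apply H; eauto.
Qed.

Lemma gen_refl a b p : gen a b p p.
Proof. apply rst_refl. Qed.

Lemma gen_sym a b p q : gen a b p q -> gen a b q p.
Proof. apply rst_sym. Qed.

Lemma gen_trans a b p q w : gen a b p q -> gen a b q w -> gen a b p w.
Proof. apply rst_trans. Qed.

Lemma gen_l a b u v : a u v -> gen a b (emb_l u) (emb_l v).
Proof. intros; apply rst_step; left; eauto. Qed.

Lemma gen_r a b u v : b u v -> gen a b (emb_r u) (emb_r v).
Proof. intros; apply rst_step; right; eauto. Qed.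

Lemma gen_map a b {T : Type} (R : T -> T -> Prop) (M : X + (X + X) -> T) :
  equivalence T R -> (forall p q, step a b p q -> R (M p) (M q)) ->
  forall p q, gen a b p q -> R (M p) (M q).
Proof. intros [Hr Ht Hs] H p q G; induction G; eauto. Qed.

Lemma step_sym a b p q : symmetric _ a -> symmetric _ b -> step a b p q -> step a b q p.
Proof.
  intros Sa Sb [[u [v [E1 [E2 H]]]]|[u [v [E1 [E2 H]]]]]; [left|right]; exists v, u; auto.
Qed.

Lemma star_refl a b u : star a b u u.
Proof. left; auto. Qed.

Lemma star_sym a b u v : star a b u v -> star a b v u.
Proof.
  intros [E|[G C]]; [left; auto|right; split; [apply gen_sym; auto|]].
  intros w G2; apply C; eapply gen_trans; eauto.
Qed.

Lemma star_trans a b u v w : star a b u v -> star a b v w -> star a b u w.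
Proof.
  intros [E|[G C]] H2; [subst; auto|].
  destruct H2 as [E|[G2 C2]]; [subst; right; auto|right; split; eauto using gen_trans].
Qed.

Lemma star_avoids a b u v : star a b u v -> u <> v -> avoids_points a b (emb_o u).
Proof. intros [E|[G C]] N; [contradiction|exact C]. Qed.

Lemma star_intro a b u v :
  gen a b (emb_o u) (emb_o v) -> avoids_points a b (emb_o u) -> star a b u v.
Proof. intros; right; split; auto. Qed.

Lemma avoids_l a b p s : avoids_points a b p -> gen a b p (emb_l s) -> ~ singleton_block a s.
Proof. intros C G S; apply (C _ G); left; eauto. Qed.

Lemma avoids_r a b p s : avoids_points a b p -> gen a b p (emb_r s) -> ~ singleton_block b s.
Proof. intros C G S; apply (C _ G); right; eauto. Qed.

Lemma star_PI a b : PIstar a -> PIstar b -> PIstar (star a b).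
Proof.
  intros Ha Hb; split.
  - split; [intros u; apply star_refl | intros u v w; apply star_trans | intros u v; apply star_sym].
  - intros u; destruct (classic (singleton_block (star a b) u)) as [S|NS]; [left; auto|right].
    destruct (not_singleton_block _ _ NS) as [v [Huv Nv]].
    assert (Cl : avoids_points a b (emb_o u)) by (eapply star_avoids; eauto).
    destruct u as [x|y].
    + split; [exists x; apply star_refl|].
      destruct (PI_line a Ha (inl x)) as [_ [m Hm]]; [apply (avoids_l a b _ _ Cl), gen_refl|].
      assert (G1 : gen a b (emb_o (inl x)) (emb_l (inr m))) by (apply (gen_l a b (inl x)); auto).
      destruct (PI_line b Hb (inl m)) as [_ [y Hy]]; [apply (avoids_r a b _ (inl m) Cl G1)|].
      exists y; apply star_intro; auto.
      eapply gen_trans; [exact G1|apply (gen_r a b (inl m) (inr y)); auto].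
    + split; [|exists y; apply star_refl].
      destruct (PI_line b Hb (inr y)) as [[m Hm] _]; [apply (avoids_r a b _ _ Cl), gen_refl|].
      assert (G1 : gen a b (emb_o (inr y)) (emb_r (inl m))) by (apply (gen_r a b (inr y)); auto).
      destruct (PI_line a Ha (inr m)) as [[x Hx] _]; [apply (avoids_l a b _ (inr m) Cl G1)|].
      exists x; apply star_intro; auto.
      eapply gen_trans; [exact G1|apply (gen_l a b (inr m) (inl x)); auto].
Qed.

Lemma zero_PI : PIstar zero_rel.
Proof.
  split; [split|].
  - intros u; reflexivity.
  - intros u v w H1 H2; unfold zero_rel in *; congruence.
  - intros u v H; unfold zero_rel in *; congruence.
  - intros u; left; intros v H; unfold zero_rel in *; auto.
Qed.

Lemma star_zero_l a : PIstar a -> star zero_rel a = zero_rel.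
Proof.
  intros Ha; apply rel_ext; intros u v; split; [|intros E; left; auto].
  intros H; destruct (classic (u = v)) as [E|N]; [auto|exfalso].
  assert (Cl : avoids_points zero_rel a (emb_o u)) by (eapply star_avoids; eauto).
  destruct u as [x|y].
  - apply (avoids_l _ _ _ (inl x) Cl (gen_refl _ _ _)). intros w Hw; auto.
  - destruct (PI_line a Ha (inr y)) as [[m Hm] _]; [apply (avoids_r _ _ _ _ Cl), gen_refl|].
    apply (avoids_l _ _ _ (inr m) Cl); [apply (gen_r _ a (inr y) (inl m)); auto|intros w Hw; auto].
Qed.

Lemma star_zero_r a : PIstar a -> star a zero_rel = zero_rel.
Proof.
  intros Ha; apply rel_ext; intros u v; split; [|intros E; left; auto].
  intros H; destruct (classic (u = v)) as [E|N]; [auto|exfalso].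
  assert (Cl : avoids_points a zero_rel (emb_o u)) by (eapply star_avoids; eauto).
  destruct u as [x|y].
  - destruct (PI_line a Ha (inl x)) as [_ [m Hm]]; [apply (avoids_l _ _ _ _ Cl), gen_refl|].
    apply (avoids_r _ _ _ (inl m) Cl); [apply (gen_l a _ (inl x) (inr m)); auto|intros w Hw; auto].
  - apply (avoids_r _ _ _ (inr y) Cl (gen_refl _ _ _)). intros w Hw; auto.
Qed.

(** * Products with a single line *)

Lemma line_sym A C u v : line A C u v -> line A C v u.
Proof. intros [E|[H1 H2]]; [left; auto|right; auto]. Qed.

Lemma line_singleton A C u : ~ in_line A C u -> singleton_block (line A C) u.
Proof. intros N v [E|[H _]]; [auto|contradiction]. Qed.

Lemma line_PI A C : nonempty A -> nonempty C -> PIstar (line A C).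
Proof.
  intros [a Ha] [c Hc]; split.
  - split.
    + intros u; left; auto.
    + intros u v w [E|[H1 H2]] [E2|[H3 H4]]; subst; try (left; reflexivity); right; auto.
    + intros u v; apply line_sym.
  - intros u; destruct (classic (in_line A C u)) as [I|N]; [right|left; apply line_singleton; auto].
    split; [exists a|exists c]; right; split; auto.
Qed.

Lemma avoids_in_line z C D u : PIstar z ->
  avoids_points z (line C D) (emb_o u) -> in_line (left_trace z C) D u.
Proof.
  intros Hz Cl; destruct u as [x|d]; simpl.
  - destruct (PI_line z Hz (inl x)) as [_ [m Hm]]; [apply (avoids_l _ _ _ _ Cl), gen_refl|].
    exists m; split; auto. apply NNPP; intros N.
    apply (avoids_r _ _ _ (inl m) Cl); [apply (gen_l z _ (inl x) (inr m)); auto|].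
    apply line_singleton; auto.
  - apply NNPP; intros N. apply (avoids_r _ _ _ (inr d) Cl (gen_refl _ _ _)).
    apply line_singleton; auto.
Qed.

Lemma gen_line_middle z C D u c : in_line (left_trace z C) D u -> C c ->
  gen z (line C D) (emb_o u) (inr (inl c)).
Proof.
  intros Hu Hc; destruct u as [x|d]; simpl in Hu.
  - destruct Hu as [y [Cy Hy]].
    apply (gen_trans _ _ _ (emb_l (inr y))); [apply (gen_l z _ (inl x) (inr y)); auto|].
    apply (gen_r z _ (inl y) (inl c)); right; simpl; auto.
  - apply (gen_r z _ (inr d) (inl c)); right; simpl; auto.
Qed.

(* The points of X ∪ X'' ∪ X' lying in the class of the line of [star z (line C D)]. *)
Definition line_class z C D p : Prop :=
  match p with inl x => left_trace z C x | inr (inl y) => C y | inr (inr d) => D d end.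

Lemma line_class_step z C D p q : PIstar z -> saturated z C ->
  step z (line C D) p q -> line_class z C D p -> line_class z C D q.
Proof.
  intros Hz [_ V] [[u [v [-> [-> H]]]]|[u [v [-> [-> H]]]]].
  - destruct u as [x|y], v as [x2|y2]; simpl.
    + intros [y [Cy Hy]]; exists y; split; auto. eapply PI_trans; eauto. apply PI_sym; auto.
    + intros [y [Cy Hy]]. apply (proj2 (V y Cy)). eapply PI_trans; eauto. apply PI_sym; auto.
    + intros Cy; exists y; split; auto; apply PI_sym; auto.
    + intros Cy; apply (proj2 (V y Cy)); auto.
  - destruct H as [E|[H1 H2]]; [subst; auto|].
    intros _; destruct v; simpl in *; auto.
Qed.

Lemma line_class_gen z C D p q : PIstar z -> saturated z C ->
  gen z (line C D) p q -> line_class z C D p -> line_class z C D q.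
Proof.
  intros Hz V G.
  enough (I : line_class z C D p <-> line_class z C D q) by tauto.
  apply (gen_map z (line C D) iff (line_class z C D)); [split; red; tauto| |exact G].
  intros p0 q0 S; split; apply line_class_step; auto.
  apply step_sym; auto; [red; apply PI_sym; auto|red; apply line_sym].
Qed.

Lemma line_class_no_point z C D w : PIstar z -> saturated z C -> nonempty D ->
  line_class z C D w -> ~ sing_point z (line C D) w.
Proof.
  intros Hz [[c Hc] V] [d Hd] K [[s [-> S]]|[s [-> S]]].
  - destruct s as [x|y]; simpl in K.
    + destruct K as [y [Cy Hy]]. specialize (S _ Hy); discriminate.
    + destruct (proj1 (V y K)) as [x Hx]. specialize (S _ Hx); discriminate.
  - destruct s as [y|e]; simpl in K.
    + assert (H : line C D (inl y) (inr d)) by (right; simpl; auto).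
      specialize (S _ H); discriminate.
    + assert (H : line C D (inr e) (inl c)) by (right; simpl; auto).
      specialize (S _ H); discriminate.
Qed.

Lemma star_line_saturated z C D : PIstar z -> saturated z C -> nonempty D ->
  star z (line C D) = line (left_trace z C) D.
Proof.
  intros Hz V HD; apply rel_ext; intros u v; split.
  - intros H; destruct (classic (u = v)) as [E|N]; [left; auto|right].
    split; apply (avoids_in_line z C D); auto.
    + eapply star_avoids; eauto.
    + apply (star_avoids _ _ v u); [apply star_sym|]; auto.
  - intros [E|[Iu Iv]]; [left; auto|].
    pose proof V as [[c Hc] _].
    apply star_intro.
    + eapply gen_trans; [apply (gen_line_middle z C D u c)|apply gen_sym, (gen_line_middle z C D v c)];
        auto.
    + intros w G. apply line_class_no_point; auto.
      apply (line_class_gen z C D (emb_o u)); auto. destruct u; auto.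
Qed.

Lemma star_line_unsaturated z C D : PIstar z -> ~ saturated z C -> nonempty C ->
  star z (line C D) = zero_rel.
Proof.
  intros Hz NV [c0 Hc0]; apply rel_ext; intros u v; split; [|intros E; left; auto].
  intros H; destruct (classic (u = v)) as [E|N]; [auto|exfalso].
  assert (Cl : avoids_points z (line C D) (emb_o u)) by (eapply star_avoids; eauto).
  pose proof (avoids_in_line z C D u Hz Cl) as Iu.
  apply NV; split; [exists c0; auto|]. intros y Cy; split.
  - destruct (PI_line z Hz (inr y)) as [[x Hx] _]; [|exists x; auto].
    apply (avoids_l _ _ _ (inr y) Cl (gen_line_middle z C D u y Iu Cy)).
  - intros y2 H2. apply NNPP; intros N2.
    apply (avoids_r _ _ _ (inl y2) Cl).
    + eapply gen_trans; [apply (gen_line_middle z C D u y Iu Cy)|].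
      apply (gen_l z _ (inr y) (inr y2)); auto.
    + apply line_singleton; auto.
Qed.

(** * Relabelling, transposition and the units *)

Lemma emb_o_inj u v : emb_o u = emb_o v -> u = v.
Proof. destruct u, v; simpl; intros E; inversion E; auto. Qed.

Lemma star_transport a b a' b' (M M' : X + (X + X) -> X + (X + X)) (m : X + X -> X + X) :
  (forall p, M (M' p) = p) -> (forall p, M' (M p) = p) ->
  (forall p q, step a' b' p q <-> step a b (M p) (M q)) ->
  (forall p, sing_point a' b' p <-> sing_point a b (M p)) ->
  (forall u, M (emb_o u) = emb_o (m u)) ->
  forall u v, star a' b' u v <-> star a b (m u) (m v).
Proof.
  intros HMM' HM'M Hstep Hpt Ho.
  assert (G1 : forall p q, gen a' b' p q -> gen a b (M p) (M q)).
  { apply gen_map; [split; red; eauto using gen_refl, gen_trans, gen_sym|].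
    intros p q S; apply rst_step, Hstep; auto. }
  assert (G2 : forall p q, gen a b p q -> gen a' b' (M' p) (M' q)).
  { apply gen_map; [split; red; eauto using gen_refl, gen_trans, gen_sym|].
    intros p q S; apply rst_step, Hstep; rewrite !HMM'; auto. }
  intros u v; split.
  - intros [E|[G C]]; [left; subst; auto|right; split].
    + rewrite <- !Ho; auto.
    + intros w Gw Sw. apply (C (M' w)).
      * rewrite <- (HM'M (emb_o u)). apply G2. rewrite Ho; auto.
      * apply Hpt; rewrite HMM'; auto.
  - intros [E|[G C]]; [left|right; split].
    + apply emb_o_inj. rewrite <- (HM'M (emb_o u)), <- (HM'M (emb_o v)), !Ho, E; auto.
    + rewrite <- (HM'M (emb_o u)), <- (HM'M (emb_o v)). apply G2. rewrite !Ho; auto.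
    + intros w Gw Sw. apply (C (M w)).
      * rewrite <- Ho. apply G1; auto.
      * apply Hpt; auto.
Qed.

Definition map_sum (f : X -> X) u : X + X :=
  match u with inl x => inl (f x) | inr y => inr (f y) end.

Definition relabel (f : X -> X) a : Rel X := fun u v => a (map_sum f u) (map_sum f v).

Definition map_sum3 (f : X -> X) p : X + (X + X) :=
  match p with
  | inl x => inl (f x) | inr (inl y) => inr (inl (f y)) | inr (inr y) => inr (inr (f y))
  end.

Section Relabel.
Variables f g : X -> X.
Hypothesis gf : forall x, g (f x) = x.
Hypothesis fg : forall x, f (g x) = x.

Lemma map_sum_K u : map_sum g (map_sum f u) = u.
Proof. destruct u; simpl; rewrite gf; auto. Qed.

Lemma map_sum_K' u : map_sum f (map_sum g u) = u.
Proof. destruct u; simpl; rewrite fg; auto. Qed.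

Lemma map_sum3_K p : map_sum3 g (map_sum3 f p) = p.
Proof. destruct p as [|[|]]; simpl; rewrite gf; auto. Qed.

Lemma map_sum3_K' p : map_sum3 f (map_sum3 g p) = p.
Proof. destruct p as [|[|]]; simpl; rewrite fg; auto. Qed.

Lemma relabel_K a : relabel g (relabel f a) = a.
Proof. apply rel_ext; intros u v; unfold relabel; rewrite !map_sum_K'; tauto. Qed.

Lemma relabel_PI a : PIstar a -> PIstar (relabel f a).
Proof.
  intros Ha; split; [split|].
  - intros u; unfold relabel; apply PI_refl; auto.
  - intros u v w; unfold relabel; apply PI_trans; auto.
  - intros u v; unfold relabel; apply PI_sym; auto.
  - intros u. destruct Ha as [_ H]. destruct (H (map_sum f u)) as [S|[[x Hx] [y Hy]]].
    + left; intros v Hv. unfold relabel in Hv. apply S in Hv.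
      rewrite <- (map_sum_K v), Hv, map_sum_K; auto.
    + right; split; [exists (g x)|exists (g y)]; unfold relabel; simpl; rewrite fg; auto.
Qed.

Lemma relabel_star a b : star (relabel f a) (relabel f b) = relabel f (star a b).
Proof.
  assert (Ml : forall h u, map_sum3 h (emb_l u) = emb_l (map_sum h u)) by (intros h []; auto).
  assert (Mr : forall h u, map_sum3 h (emb_r u) = emb_r (map_sum h u)) by (intros h []; auto).
  apply rel_ext; intros u v. unfold relabel at 3.
  apply (star_transport a b _ _ (map_sum3 f) (map_sum3 g) (map_sum f));
    [exact map_sum3_K'|exact map_sum3_K| | |intros []; auto].
  - intros p q; split.
    + intros [[u0 [v0 [-> [-> H]]]]|[u0 [v0 [-> [-> H]]]]]; [left|right];
        exists (map_sum f u0), (map_sum f v0); rewrite ?Ml, ?Mr; auto.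
    + intros [[u0 [v0 [E1 [E2 H]]]]|[u0 [v0 [E1 [E2 H]]]]]; [left|right];
        exists (map_sum g u0), (map_sum g v0);
        rewrite <- (map_sum3_K p), <- (map_sum3_K q), E1, E2, ?Ml, ?Mr;
        unfold relabel; rewrite !map_sum_K'; auto.
  - intros p; split.
    + intros [[s [-> S]]|[s [-> S]]]; [left|right]; exists (map_sum f s); rewrite ?Ml, ?Mr;
        split; auto; intros w Hw; rewrite <- (map_sum_K' w) in Hw |- *; f_equal; apply S; auto.
    + intros [[s [E S]]|[s [E S]]]; [left|right]; exists (map_sum g s);
        (split; [rewrite <- (map_sum3_K p), E, ?Ml, ?Mr; auto|]);
        intros w Hw; unfold relabel in Hw; rewrite map_sum_K' in Hw; apply S in Hw;
        rewrite <- Hw, map_sum_K; auto.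
Qed.

Lemma saturated_relabel a C : saturated (relabel g a) C <-> saturated a (fun y => C (f y)).
Proof.
  unfold saturated, relabel, nonempty; simpl; split.
  - intros [[y0 H0] V]; split; [exists (g y0); rewrite fg; auto|].
    intros y Cy. destruct (V (f y) Cy) as [[x Hx] V2]. rewrite gf in Hx, V2. split.
    + exists (g x); auto.
    + intros y2 H2. apply V2. rewrite gf; auto.
  - intros [[y0 H0] V]; split; [exists (f y0); auto|].
    intros y Cy. rewrite <- (fg y) in Cy. destruct (V (g y) Cy) as [[x Hx] V2]. split.
    + exists (f x); rewrite gf; auto.
    + intros y2 H2. rewrite <- (fg y2). apply V2; auto.
Qed.

Lemma left_trace_relabel a C :
  left_trace (relabel g a) C = fun w => left_trace a (fun y => C (f y)) (g w).
Proof.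
  apply pred_ext; intros w; unfold left_trace, relabel; simpl; split.
  - intros [y [Cy H]]; exists (g y); rewrite fg; auto.
  - intros [y [Cy H]]; exists (f y); rewrite gf; auto.
Qed.

End Relabel.

Lemma relabel_aut (f g : X -> X) : (forall x, g (f x) = x) -> (forall x, f (g x) = x) ->
  is_aut (relabel f).
Proof.
  intros gf fg; split; [|split; [|split]].
  - apply (relabel_PI f g gf fg).
  - intros a b Ha Hb E. rewrite <- (relabel_K f g fg a), <- (relabel_K f g fg b), E; auto.
  - intros b Hb. exists (relabel g b); split.
    + apply (relabel_PI g f fg gf); auto.
    + apply (relabel_K g f gf).
  - intros a b Ha Hb. symmetry; apply (relabel_star f g gf fg).
Qed.

Lemma relabel_comp (f h : X -> X) a : relabel (fun x => h (f x)) a = relabel f (relabel h a).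
Proof. apply rel_ext; intros u v; unfold relabel; destruct u, v; simpl; tauto. Qed.

Definition swap u : X + X := match u with inl x => inr x | inr x => inl x end.
Definition transpose a : Rel X := fun u v => a (swap u) (swap v).

Lemma swap_K u : swap (swap u) = u.
Proof. destruct u; auto. Qed.

Lemma transpose_K a : transpose (transpose a) = a.
Proof. apply rel_ext; intros u v; unfold transpose; rewrite !swap_K; tauto. Qed.

Lemma transpose_star a b : star (transpose b) (transpose a) = transpose (star a b).
Proof.
  set (M := fun p : X + (X + X) => match p with
              | inl x => inr (inr x) | inr (inl y) => inr (inl y) | inr (inr y) => inl y end).
  assert (MK : forall p, M (M p) = p) by (intros [|[|]]; auto).
  assert (Ml : forall u, M (emb_l u) = emb_r (swap u)) by (intros []; auto).
  assert (Mr : forall u, M (emb_r u) = emb_l (swap u)) by (intros []; auto).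
  apply rel_ext; intros u v. unfold transpose at 3.
  apply (star_transport a b _ _ M M swap); [exact MK|exact MK| | |intros []; auto].
  - intros p q; split.
    + intros [[u0 [v0 [-> [-> H]]]]|[u0 [v0 [-> [-> H]]]]]; [right|left];
        exists (swap u0), (swap v0); rewrite ?Ml, ?Mr; auto.
    + intros [[u0 [v0 [E1 [E2 H]]]]|[u0 [v0 [E1 [E2 H]]]]]; [right|left];
        exists (swap u0), (swap v0); rewrite <- (MK p), <- (MK q), E1, E2, ?Ml, ?Mr;
        unfold transpose; rewrite !swap_K; auto.
  - intros p; split.
    + intros [[s [-> S]]|[s [-> S]]]; [right|left]; exists (swap s); rewrite ?Ml, ?Mr;
        split; auto; intros w Hw;
        assert (E : swap w = s) by (apply S; unfold transpose; rewrite swap_K; auto);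
        subst; rewrite swap_K; auto.
    + intros [[s [E S]]|[s [E S]]]; [right|left]; exists (swap s);
        (split; [rewrite <- (MK p), E, ?Ml, ?Mr; auto|]);
        intros w Hw; unfold transpose in Hw; rewrite swap_K in Hw; apply S in Hw;
        rewrite <- Hw, swap_K; auto.
Qed.

Lemma transpose_PI a : PIstar a -> PIstar (transpose a).
Proof.
  intros Ha; split; [split|].
  - intros u; unfold transpose; apply PI_refl; auto.
  - intros u v w; unfold transpose; apply PI_trans; auto.
  - intros u v; unfold transpose; apply PI_sym; auto.
  - intros u. destruct Ha as [_ H]. destruct (H (swap u)) as [S|[[x Hx] [y Hy]]].
    + left; intros v Hv. apply S in Hv. rewrite <- (swap_K v), Hv, swap_K; auto.
    + right; split; [exists y|exists x]; auto.
Qed.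

Lemma transpose_line A C : transpose (line A C) = line C A.
Proof.
  apply rel_ext; intros u v; unfold transpose, line; split.
  - intros [E|[H1 H2]]; [left; rewrite <- (swap_K u), E, swap_K; auto|].
    right; destruct u, v; simpl in *; auto.
  - intros [E|[H1 H2]]; [left; subst; auto|right; destruct u, v; simpl in *; auto].
Qed.

Lemma line_star_transpose z A C : star (line A C) z = transpose (star (transpose z) (line C A)).
Proof. rewrite <- transpose_star, transpose_line, !transpose_K; auto. Qed.

Lemma line_star_saturated z A C : PIstar z -> saturated (transpose z) C -> nonempty A ->
  star (line A C) z = line A (left_trace (transpose z) C).
Proof.
  intros Hz V HA.
  rewrite line_star_transpose, star_line_saturated, transpose_line; auto using transpose_PI.
Qed.

Definition map_left (g : X -> X) u : X + X := match u with inl x => inl (g x) | inr y => inr y end.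
Definition relabel_left (g : X -> X) a : Rel X := fun u v => a (map_left g u) (map_left g v).

(* Identifies x with its partner (g x)'' in [perm_rel g], and X'' with the X of the right factor. *)
Definition perm_fold (g : X -> X) p : X + X :=
  match p with inl x => inl (g x) | inr (inl y) => inl y | inr (inr y) => inr y end.

Lemma gen_perm_fold (g : X -> X) a p q : PIstar a ->
  gen (perm_rel g) a p q <-> a (perm_fold g p) (perm_fold g q).
Proof.
  intros Ha.
  assert (G0 : forall p, gen (perm_rel g) a p (emb_r (perm_fold g p))).
  { intros [x|[y|y]]; simpl; try apply gen_refl.
    apply (gen_l (perm_rel g) a (inl x) (inr (g x))). right; exists x; left; auto. }
  split.
  - revert p q; apply gen_map; [exact (proj1 Ha)|].
    intros p q [[u [v [-> [-> H]]]]|[u [v [-> [-> H]]]]].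
    + destruct H as [E|[x [[-> ->]|[-> ->]]]]; [subst|..]; apply PI_refl; auto.
    + destruct u, v; simpl; auto.
  - intros H. eapply gen_trans; [apply G0|]. eapply gen_trans; [|apply gen_sym; apply G0].
    apply gen_r; auto.
Qed.

Lemma perm_star_l (f g : X -> X) a : (forall x, g (f x) = x) -> (forall x, f (g x) = x) ->
  PIstar a -> star (perm_rel g) a = relabel_left g a.
Proof.
  intros gf fg Ha.
  assert (Pt : forall w, sing_point (perm_rel g) a w -> exists s, w = emb_r s /\ singleton_block a s).
  { intros w [[s [-> S]]|H]; auto. exfalso. destruct s as [x|y].
    - assert (H : perm_rel g (inl x) (inr (g x))) by (right; exists x; left; auto).
      apply S in H; discriminate.
    - assert (H : perm_rel g (inr y) (inl (f y))) by (right; exists (f y); right; rewrite gf; auto).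
      apply S in H; discriminate. }
  assert (Fo : forall u, perm_fold g (emb_o u) = map_left g u) by (intros [|]; auto).
  assert (Fr : forall s, perm_fold g (emb_r s) = s) by (intros [|]; auto).
  assert (Linj : forall u v, map_left g u = map_left g v -> u = v).
  { intros [x|y] [x2|y2]; simpl; intros E; inversion E as [E']; auto.
    rewrite <- (fg x), <- (fg x2), E'; auto. }
  apply rel_ext; intros u v; split.
  - intros [E|[G C]]; [subst; apply (PI_refl a Ha)|].
    unfold relabel_left; rewrite <- !Fo; apply gen_perm_fold; auto.
  - intros H. destruct (classic (u = v)) as [E|N]; [left; auto|right; split].
    + apply gen_perm_fold; auto. rewrite !Fo; auto.
    + intros w Gw Sw. destruct (Pt w Sw) as [s [-> S]].
      apply gen_perm_fold in Gw; auto. rewrite Fo, Fr in Gw.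
      assert (E1 : s = map_left g u) by (symmetry; apply S; apply PI_sym; auto).
      assert (E2 : map_left g v = s) by (apply S; rewrite E1; auto).
      apply N, Linj; congruence.
Qed.

Definition perm_class (f : X -> X) u : X := match u with inl x => x | inr y => f y end.

Lemma perm_rel_iff (f g : X -> X) : (forall x, g (f x) = x) -> (forall x, f (g x) = x) ->
  forall u v, perm_rel g u v <-> perm_class f u = perm_class f v.
Proof.
  intros gf fg u v; split.
  - intros [E|[x [[-> ->]|[-> ->]]]]; subst; simpl; auto.
  - destruct u as [x|y], v as [x2|y2]; simpl; intros E.
    + left; congruence.
    + right; exists x; left; subst; rewrite gf; auto.
    + right; exists x2; right; subst; rewrite gf; auto.
    + left; rewrite <- (gf y), <- (gf y2), E; auto.
Qed.

Lemma perm_PI (f g : X -> X) : (forall x, g (f x) = x) -> (forall x, f (g x) = x) ->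
  PIstar (perm_rel g).
Proof.
  intros gf fg. pose proof (perm_rel_iff f g gf fg) as P. split; [split|].
  - intros u; left; auto.
  - intros u v w H1 H2; apply P; apply P in H1; apply P in H2; congruence.
  - intros u v H1; apply P; apply P in H1; congruence.
  - intros [x|y]; right; split.
    + exists x; left; auto.
    + exists (g x); apply P; simpl; auto.
    + exists (f y); apply P; simpl; auto.
    + exists y; left; auto.
Qed.

Lemma transpose_perm (f g : X -> X) : (forall x, g (f x) = x) -> (forall x, f (g x) = x) ->
  transpose (perm_rel f) = perm_rel g.
Proof.
  intros gf fg. apply rel_ext; intros u v. unfold transpose.
  rewrite (perm_rel_iff g f fg gf), (perm_rel_iff f g gf fg).
  assert (K : forall w, perm_class g (swap w) = g (perm_class f w)) by (intros [x|y]; simpl; auto).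
  rewrite !K; split; intros E; [rewrite <- (fg (perm_class f u)), <- (fg (perm_class f v)), E|rewrite E];
    auto.
Qed.

Lemma perm_conjugation (f g : X -> X) a : (forall x, g (f x) = x) -> (forall x, f (g x) = x) ->
  PIstar a -> star (star (perm_rel g) a) (perm_rel f) = relabel g a.
Proof.
  intros gf fg Ha.
  assert (Hl : PIstar (relabel_left g a)).
  { rewrite <- (perm_star_l f g); auto. apply star_PI; auto. apply (perm_PI f g); auto. }
  rewrite (perm_star_l f g a gf fg Ha).
  rewrite <- (transpose_K (relabel_left g a)), <- (transpose_K (perm_rel f)), transpose_star,
    (transpose_perm f g gf fg), (perm_star_l f g); auto using transpose_PI.
  apply rel_ext; intros u v; unfold transpose, relabel_left, relabel.
  destruct u, v; simpl; tauto.
Qed.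

Lemma perm_star (f g h k : X -> X) : (forall x, g (f x) = x) -> (forall x, f (g x) = x) ->
  (forall x, k (h x) = x) -> (forall x, h (k x) = x) ->
  star (perm_rel f) (perm_rel h) = perm_rel (fun x => h (f x)).
Proof.
  intros gf fg kh hk.
  rewrite (perm_star_l g f); auto; [|apply (perm_PI k h); auto].
  apply rel_ext; intros u v. unfold relabel_left.
  rewrite (perm_rel_iff k h hk kh), (perm_rel_iff (fun x => g (k x)) (fun x => h (f x))).
  - assert (K : forall w, perm_class (fun x => g (k x)) w = g (perm_class k (map_left f w)))
      by (intros [x|y]; simpl; auto).
    rewrite !K. split; intros E;
      [rewrite E|rewrite <- (fg (perm_class k (map_left f u))), <- (fg (perm_class k (map_left f v))), E];
      auto.
  - intros x; rewrite fg, hk; auto.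
  - intros x; rewrite kh, gf; auto.
Qed.

(** * Elements with a single line *)

Lemma in_line_iff A C u : nonempty A -> nonempty C ->
  (in_line A C u <-> exists v, v <> u /\ line A C u v).
Proof.
  intros [a Ha] [c Hc]; split.
  - intros I; destruct u as [x|y].
    + exists (inr c); split; [discriminate|right; simpl in *; auto].
    + exists (inl a); split; [discriminate|right; simpl in *; auto].
  - intros [v [N [E|[I _]]]]; [congruence|auto].
Qed.

Lemma line_inj A C A' C' : nonempty A -> nonempty C -> nonempty A' -> nonempty C' ->
  line A C = line A' C' -> A = A' /\ C = C'.
Proof.
  intros HA HC HA' HC' E.
  assert (K : forall u, in_line A C u <-> in_line A' C' u).
  { intros u; rewrite (in_line_iff A C u HA HC), (in_line_iff A' C' u HA' HC'), E; tauto. }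
  split; apply pred_ext; intros x; [apply (K (inl x))|apply (K (inr x))].
Qed.

Lemma line_neq_zero A C : nonempty A -> nonempty C -> line A C <> zero_rel.
Proof.
  intros [a Ha] [c Hc] E. assert (H : line A C (inl a) (inr c)) by (right; simpl; auto).
  rewrite E in H; discriminate.
Qed.

Lemma saturated_line A C E : saturated (line A C) E -> E = C.
Proof.
  intros [[y0 Hy0] V]; apply pred_ext; intros y; split.
  - intros Ey. destruct (proj1 (V y Ey)) as [x [Hx|[H1 H2]]]; [discriminate|auto].
  - intros Cy. destruct (proj1 (V y0 Hy0)) as [x [Hx|[H1 H2]]]; [discriminate|].
    apply (proj2 (V y0 Hy0)). right; simpl in *; auto.
Qed.

Lemma saturated_line_self A C : nonempty A -> nonempty C -> saturated (line A C) C.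
Proof.
  intros [a Ha] HC; split; auto. intros y Cy; split.
  - exists a; right; simpl; auto.
  - intros y2 [E|[_ H]]; [inversion E; subst; auto|auto].
Qed.

Lemma left_trace_line A C : nonempty C -> left_trace (line A C) C = A.
Proof.
  intros [c Hc]; apply pred_ext; intros x; split.
  - intros [y [Cy [E|[H _]]]]; [discriminate|auto].
  - intros Ax; exists c; split; auto; right; simpl; auto.
Qed.

Lemma left_trace_nonempty z C : PIstar z -> saturated z C -> nonempty (left_trace z C).
Proof.
  intros Hz [[y Hy] V]. destruct (proj1 (V y Hy)) as [x Hx]. exists x, y; split; auto.
  apply PI_sym; auto.
Qed.

Lemma star_line_line A C D : nonempty A -> nonempty C -> nonempty D ->
  star (line A C) (line C D) = line A D.
Proof.
  intros; rewrite star_line_saturated, left_trace_line; auto.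
  - apply line_PI; auto.
  - apply saturated_line_self; auto.
Qed.

Lemma star_line_nonzero z C D : PIstar z -> nonempty C -> nonempty D ->
  star z (line C D) <> zero_rel -> saturated z C /\ star z (line C D) = line (left_trace z C) D.
Proof.
  intros Hz HC HD N. destruct (classic (saturated z C)) as [V|V].
  - split; auto; apply star_line_saturated; auto.
  - exfalso; apply N, star_line_unsaturated; auto.
Qed.

Definition is_line a : Prop := exists A C, nonempty A /\ nonempty C /\ a = line A C.

(* An algebraic characterisation of [is_line], hence one preserved by automorphisms. *)
Definition line_like w : Prop :=
  w <> zero_rel /\
  forall b, PIstar b -> star (star w b) w = zero_rel \/ star (star w b) w = w.

Lemma line_like_line w : is_line w -> line_like w.
Proof.
  intros [A [C [HA [HC ->]]]]; split; [apply line_neq_zero; auto|].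
  intros b Hb. set (z := star (line A C) b).
  assert (Hz : PIstar z) by (apply star_PI; auto; apply line_PI; auto).
  assert (supp : forall x v, z (inl x) v -> v <> inl x -> A x).
  { intros x v H N. apply NNPP; intros NA.
    apply (avoids_l (line A C) b (emb_o (inl x)) (inl x)); [eapply star_avoids; eauto|apply gen_refl|].
    apply line_singleton; auto. }
  destruct (classic (saturated z A)) as [V|V]; [right|left; apply star_line_unsaturated; auto].
  rewrite star_line_saturated; auto. f_equal. apply pred_ext; intros x; split.
  - intros [y [Ay Hy]]. eapply supp; eauto; discriminate.
  - intros Ax. destruct V as [[y0 Hy0] V]. destruct (proj1 (V y0 Hy0)) as [x0 Hx0].
    apply (PI_sym z Hz) in Hx0.
    assert (A0 : A x0) by (eapply supp; eauto; discriminate).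
    assert (H1 : z (inl x0) (inl x)).
    { apply star_intro.
      - apply (gen_l (line A C) b (inl x0) (inl x)); right; simpl; auto.
      - eapply star_avoids; [exact Hx0|discriminate]. }
    exists y0; split; auto. eapply PI_trans; eauto. apply PI_sym; auto.
Qed.

Lemma nonzero_cross w : PIstar w -> w <> zero_rel -> exists x y, w (inl x) (inr y).
Proof.
  intros Hw N. assert (E : exists u v, w u v /\ u <> v).
  { apply NNPP; intros H; apply N; apply rel_ext; intros u v; split.
    - intros H1; apply NNPP; intros H2; apply H; eauto.
    - intros E; unfold zero_rel in E; subst; apply PI_refl; auto. }
  destruct E as [u [v [H1 H2]]]. destruct (PI_line_of w Hw u v H1 H2) as [[x Hx] [y Hy]].
  exists x, y. eapply PI_trans; eauto. apply PI_sym; auto.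
Qed.

(* With A0 ∪ C0' the line of w through x0, w ⋆ line C0 A0 ⋆ w = line A0 C0 ≠ 0. *)
Lemma line_of_line_like w : PIstar w -> line_like w -> is_line w.
Proof.
  intros Hw [N Q]. destruct (nonzero_cross w Hw N) as [x0 [y0 H0]].
  set (A0 := fun x => w (inl x0) (inl x)). set (C0 := fun y => w (inl x0) (inr y)).
  assert (HA : nonempty A0) by (exists x0; unfold A0; apply (PI_refl w Hw)).
  assert (HC : nonempty C0) by (exists y0; unfold C0; auto).
  assert (V1 : saturated w C0).
  { split; auto. intros y Cy; split.
    - exists x0; unfold C0 in Cy; apply (PI_sym w Hw); auto.
    - intros y2 H; unfold C0 in *; eapply (PI_trans w Hw); eauto. }
  assert (E1 : left_trace w C0 = A0).
  { apply pred_ext; intros x; unfold left_trace, A0, C0; split.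
    - intros [y [Cy Hy]]; eapply (PI_trans w Hw); eauto; apply (PI_sym w Hw); auto.
    - intros Ax; exists y0; split; auto; eapply (PI_trans w Hw); [apply (PI_sym w Hw); eauto|]; auto. }
  assert (V2 : saturated (transpose w) A0).
  { split; auto. intros y Ay; split.
    - exists y0; unfold transpose, A0 in *; simpl.
      eapply (PI_trans w Hw); [apply (PI_sym w Hw); eauto|]; auto.
    - intros y2 H; unfold transpose in H; simpl in H; unfold A0 in *; eapply (PI_trans w Hw); eauto. }
  assert (E2 : left_trace (transpose w) A0 = C0).
  { apply pred_ext; intros x; unfold left_trace, A0, C0, transpose; simpl; split.
    - intros [y [Ay Hy]]; eapply (PI_trans w Hw); eauto; apply (PI_sym w Hw); auto.
    - intros Cx; exists x0; split; [apply (PI_refl w Hw)|apply (PI_sym w Hw); auto]. }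
  assert (P1 : star (star w (line C0 A0)) w = line A0 C0).
  { rewrite star_line_saturated, E1, line_star_saturated, E2; auto. }
  destruct (Q (line C0 A0) (line_PI C0 A0 HC HA)) as [Z|Z]; rewrite P1 in Z.
  - exfalso; exact (line_neq_zero A0 C0 HA HC Z).
  - exists A0, C0; auto.
Qed.

(** * Inclusion of subsets through products *)

Lemma saturated_union z F1 F2 :
  saturated z F1 -> saturated z F2 -> saturated z (fun y => F1 y \/ F2 y).
Proof.
  intros [[y1 H1] V1] [_ V2]; split; [exists y1; auto|].
  intros y [Hy|Hy]; [destruct (V1 y Hy) as [A B]|destruct (V2 y Hy) as [A B]]; split; auto.
Qed.

Lemma star_line_diag z D E : PIstar z -> nonempty D -> nonempty E ->
  star z (line D D) = line E D -> saturated z D /\ left_trace z D = E.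
Proof.
  intros Hz HD HE H.
  destruct (star_line_nonzero z D D Hz HD HD) as [V E2]; [rewrite H; apply line_neq_zero; auto|].
  split; auto. rewrite H in E2. symmetry in E2.
  apply line_inj in E2; auto; [tauto|apply left_trace_nonempty; auto].
Qed.

(* [D ⊆ C] expressed through [star] and lines only, so that automorphisms transport it. *)
Definition incl_alg D C : Prop :=
  D = C \/ exists z E, PIstar z /\ nonempty E /\
    (forall F, nonempty F -> star z (line F F) <> zero_rel -> F = C \/ F = D \/ F = E) /\
    star z (line D D) = line E D /\ star z (line E E) = line D E /\ D <> E.

Lemma incl_alg_sound D C : nonempty D -> nonempty C -> incl_alg D C -> forall x, D x -> C x.
Proof.
  intros HD HC [Eq|[z [E [Hz [HE [HF [H1 [H2 N]]]]]]]]; [subst; auto|].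
  (* D ∪ E is saturated for z, hence it is C, D or E; the last two cases force D = E. *)
  destruct (star_line_diag z D E Hz HD HE H1) as [VD AD].
  destruct (star_line_diag z E D Hz HE HD H2) as [VE AE].
  pose proof (saturated_union z D E VD VE) as VU.
  assert (HU : nonempty (fun y => D y \/ E y)) by (destruct HD as [d Hd]; exists d; auto).
  destruct (HF _ HU) as [U|[U|U]].
  - rewrite star_line_saturated; auto. apply line_neq_zero; auto. apply left_trace_nonempty; auto.
  - intros x Dx. rewrite <- U; auto.
  - exfalso; apply N. apply pred_ext; intros x; split.
    + intros Dx. rewrite <- AE in Dx. destruct Dx as [y [Ey Hy]].
      assert (Dy : D y) by (rewrite <- U; auto). rewrite <- AD. exists y; auto.
    + intros Ex. rewrite <- U; auto.
  - exfalso; apply N. apply pred_ext; intros x; split.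
    + intros Dx. rewrite <- U; auto.
    + intros Ex. rewrite <- AD in Ex. destruct Ex as [y [Dy Hy]].
      assert (Ey : E y) by (rewrite <- U; auto). rewrite <- AE. exists y; auto.
Qed.

(* The lines D ∪ E' and E ∪ D'; for E = C ∖ D it witnesses [incl_alg D C]. *)
Definition swap_lines D E : Rel X :=
  fun u v => u = v \/ (in_line D E u /\ in_line D E v) \/ (in_line E D u /\ in_line E D v).

Section SwapLines.
Variables D E : X -> Prop.
Hypothesis HD : nonempty D.
Hypothesis HE : nonempty E.
Hypothesis disj : forall x, D x -> E x -> False.

Lemma swap_lines_comm : swap_lines D E = swap_lines E D.
Proof. apply rel_ext; intros u v; unfold swap_lines; tauto. Qed.

Lemma swap_lines_PI : PIstar (swap_lines D E).
Proof.
  destruct HD as [d Hd], HE as [e He].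
  assert (NB : forall v, in_line D E v -> in_line E D v -> False) by (intros [x|y]; simpl; eauto).
  split; [split|].
  - intros u; left; auto.
  - intros u v w [E1|[[H1 H2]|[H1 H2]]] [E2|[[H3 H4]|[H3 H4]]]; subst; unfold swap_lines; auto;
      try (right; left; auto; fail); try (right; right; auto; fail); exfalso; eauto.
  - intros u v [E1|[[H1 H2]|[H1 H2]]]; [left; auto|right; left; auto|right; right; auto].
  - intros u. destruct (classic (in_line D E u)) as [I|I]; [right|].
    { split; [exists d|exists e]; right; left; split; auto. }
    destruct (classic (in_line E D u)) as [I2|I2]; [right|left].
    { split; [exists e|exists d]; right; right; split; auto. }
    intros v [E1|[[H1 H2]|[H1 H2]]]; auto; contradiction.
Qed.

Lemma star_swap_lines : star (swap_lines D E) (line D D) = line E D.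
Proof.
  destruct HE as [e He].
  assert (V : saturated (swap_lines D E) D).
  { split; auto. intros y Dy; split.
    - exists e; right; right; simpl; auto.
    - intros y2 [E1|[[H1 H2]|[H1 H2]]]; [inversion E1; subst; auto|simpl in *; exfalso; eauto|auto]. }
  rewrite star_line_saturated; auto using swap_lines_PI. f_equal.
  apply pred_ext; intros x; split.
  - intros [y [Dy [E1|[[H1 H2]|[H1 H2]]]]]; [discriminate|simpl in *; exfalso; eauto|auto].
  - intros Ex. destruct HD as [d Hd]. exists d; split; auto. right; right; simpl; auto.
Qed.

Lemma saturated_swap_lines F : saturated (swap_lines D E) F ->
  F = (fun y => D y \/ E y) \/ F = D \/ F = E.
Proof.
  intros [[y0 F0] V].
  assert (Fin : forall y, F y -> D y \/ E y).
  { intros y Fy. destruct (proj1 (V y Fy)) as [x [E1|[[H1 H2]|[H1 H2]]]]; [discriminate|auto|auto]. }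
  assert (FD : forall y, F y -> D y -> forall y2, D y2 -> F y2).
  { intros y Fy Dy y2 Dy2. apply (proj2 (V y Fy)). right; right; simpl; auto. }
  assert (FE : forall y, F y -> E y -> forall y2, E y2 -> F y2).
  { intros y Fy Ey y2 Ey2. apply (proj2 (V y Fy)). right; left; simpl; auto. }
  destruct (classic (exists y, F y /\ D y)) as [[y1 [F1 D1]]|ND];
    destruct (classic (exists y, F y /\ E y)) as [[y2 [F2 E2]]|NE].
  - left. apply pred_ext; intros x; split; auto.
    intros [Dx|Ex]; [apply (FD y1 F1 D1)|apply (FE y2 F2 E2)]; auto.
  - right; left. apply pred_ext; intros x; split; [|apply (FD y1 F1 D1)].
    intros Fx; destruct (Fin x Fx) as [H|H]; auto. exfalso; apply NE; eauto.
  - right; right. apply pred_ext; intros x; split; [|apply (FE y2 F2 E2)].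
    intros Fx; destruct (Fin x Fx) as [H|H]; auto. exfalso; apply ND; eauto.
  - exfalso. destruct (Fin y0 F0); [apply ND|apply NE]; eauto.
Qed.

End SwapLines.

Lemma incl_alg_complete D C : nonempty D -> nonempty C -> (forall x, D x -> C x) -> incl_alg D C.
Proof.
  intros HD HC Inc. destruct (classic (D = C)) as [Eq|Neq]; [left; auto|right].
  set (E := fun x => C x /\ ~ D x).
  assert (HE : nonempty E).
  { apply NNPP; intros N. apply Neq, pred_ext; intros x; split; auto.
    intros Cx; apply NNPP; intros ND; apply N; exists x; split; auto. }
  assert (disj : forall x, D x -> E x -> False) by (intros x H1 [_ H2]; auto).
  assert (disj' : forall x, E x -> D x -> False) by eauto.
  assert (U : (fun y => D y \/ E y) = C).
  { apply pred_ext; intros x; unfold E; split; [intros [H|[H _]]; auto|].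
    intros Cx; destruct (classic (D x)); auto. }
  exists (swap_lines D E), E.
  split; [apply swap_lines_PI; auto|split; [auto|split; [|split; [|split]]]].
  - intros F HF N. rewrite <- U. apply saturated_swap_lines; auto.
    apply NNPP; intros V; apply N, star_line_unsaturated; auto. apply swap_lines_PI; auto.
  - apply star_swap_lines; auto.
  - rewrite swap_lines_comm. apply star_swap_lines; auto.
  - intros Eq. destruct HD as [d Hd]. apply (disj d); auto. rewrite <- Eq; auto.
Qed.

Definition right_class z (y : X) : X -> Prop := fun y2 => z (inr y) (inr y2).

Lemma saturated_right_class z x y : PIstar z -> z (inr y) (inl x) -> saturated z (right_class z y).
Proof.
  intros Hz H; split; [exists y; apply (PI_refl z Hz)|]. intros y2 Hy2; split.
  - exists x. eapply (PI_trans z Hz); [apply (PI_sym z Hz); exact Hy2|exact H].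
  - intros y3 H3; unfold right_class in *; eapply (PI_trans z Hz); eauto.
Qed.

Lemma cross_incl_of_traces b c : PIstar b -> PIstar c ->
  (forall C, saturated b C <-> saturated c C) ->
  (forall C, saturated b C -> left_trace b C = left_trace c C) ->
  forall x y, b (inl x) (inr y) -> c (inl x) (inr y).
Proof.
  intros Hb Hc V T x y H.
  assert (Vb : saturated b (right_class b y))
    by (apply (saturated_right_class b x); auto; apply (PI_sym b Hb); auto).
  assert (Tx : left_trace c (right_class b y) x).
  { rewrite <- T; auto. exists y; split; auto. apply (PI_refl b Hb). }
  destruct Tx as [y3 [Hy3 Hxy3]].
  destruct (proj2 (proj1 (V _) Vb) y (PI_refl b Hb _)) as [[x' Hx'] _].
  assert (Vc : saturated b (right_class c y)) by (apply V, (saturated_right_class c x'); auto).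
  assert (Cy3 : right_class c y y3) by (apply (proj2 (proj2 Vc y (PI_refl c Hc _))); auto).
  eapply (PI_trans c Hc); [exact Hxy3|]. apply (PI_sym c Hc); auto.
Qed.

Lemma PI_incl_of_cross b c : PIstar b -> PIstar c ->
  (forall x y, b (inl x) (inr y) -> c (inl x) (inr y)) -> forall u v, b u v -> c u v.
Proof.
  intros Hb Hc K u v H.
  destruct (classic (u = v)) as [E|N]; [subst; apply (PI_refl c Hc)|].
  destruct (PI_line_of b Hb u v H N) as [[x Hx] [y Hy]].
  assert (Bxy : b (inl x) (inr y)) by (eapply (PI_trans b Hb); [apply (PI_sym b Hb); eauto|]; auto).
  assert (Kx : forall w, b w (inl x) -> c w (inl x)).
  { intros [x1|y1] Hw.
    - assert (c (inl x1) (inr y)) by (apply K; eapply (PI_trans b Hb); eauto).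
      eapply (PI_trans c Hc); eauto. apply (PI_sym c Hc); auto.
    - apply (PI_sym c Hc), K, (PI_sym b Hb); auto. }
  eapply (PI_trans c Hc); [apply Kx; eauto|]. apply (PI_sym c Hc), Kx.
  eapply (PI_trans b Hb); [apply (PI_sym b Hb); eauto|]; auto.
Qed.

Lemma PI_ext_traces b c : PIstar b -> PIstar c ->
  (forall C, saturated b C <-> saturated c C) ->
  (forall C, saturated b C -> left_trace b C = left_trace c C) -> b = c.
Proof.
  intros Hb Hc V T. apply rel_ext; intros u v; split; apply PI_incl_of_cross; auto.
  - apply cross_incl_of_traces; auto.
  - apply cross_incl_of_traces; auto.
    + intros C; symmetry; auto.
    + intros C Vc; symmetry; apply T, V; auto.
Qed.

(** * Automorphisms *)

Section Automorphism.
Variable phi : Rel X -> Rel X.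
Hypothesis Hphi : is_aut phi.

Lemma aut_zero : phi zero_rel = zero_rel.
Proof.
  destruct Hphi as [HP [_ [Hs Hh]]].
  assert (L : forall b, PIstar b -> star (phi zero_rel) b = phi zero_rel).
  { intros b Hb. destruct (Hs b Hb) as [b0 [Hb0 <-]].
    rewrite <- Hh, star_zero_l; auto using zero_PI. }
  rewrite <- (L zero_rel zero_PI). apply star_zero_r; auto using zero_PI.
Qed.

Lemma aut_is_line a : is_line a -> is_line (phi a).
Proof.
  intros La. destruct Hphi as [HP [Hi [Hs Hh]]].
  assert (Ha : PIstar a) by (destruct La as [A [C [HA [HC ->]]]]; apply line_PI; auto).
  apply line_of_line_like; [apply HP; auto|]. destruct (line_like_line a La) as [N Q]. split.
  - intros E. apply N, Hi; auto using zero_PI. rewrite E, aut_zero; auto.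
  - intros b Hb. destruct (Hs b Hb) as [b0 [Hb0 <-]].
    rewrite <- !Hh; auto using star_PI.
    destruct (Q b0 Hb0) as [E|E]; rewrite E; [left; apply aut_zero|right; auto].
Qed.

Lemma aut_line_diag C : nonempty C -> exists C', nonempty C' /\ phi (line C C) = line C' C'.
Proof.
  intros HC. destruct Hphi as [HP [Hi [Hs Hh]]].
  destruct (aut_is_line (line C C)) as [A' [C' [HA' [HC' E]]]]; [exists C, C; auto|].
  pose proof (star_line_line C C C HC HC HC) as B.
  apply (f_equal phi) in B; rewrite Hh, E in B by (apply line_PI; auto).
  destruct (star_line_nonzero (line A' C') A' C') as [V _]; auto using line_PI;
    [rewrite B; apply line_neq_zero; auto|].
  apply saturated_line in V. subst; exists C'; auto.
Qed.

Definition aut_set C : X -> Prop :=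
  epsilon (inhabits (fun _ : X => True)) (fun C' => nonempty C' /\ phi (line C C) = line C' C').

Lemma aut_set_spec C : nonempty C ->
  nonempty (aut_set C) /\ phi (line C C) = line (aut_set C) (aut_set C).
Proof.
  intros HC.
  exact (epsilon_spec _ (fun C' => nonempty C' /\ phi (line C C) = line C' C') (aut_line_diag C HC)).
Qed.

Lemma aut_line_right A C : nonempty A -> nonempty C ->
  exists A', nonempty A' /\ phi (line A C) = line A' (aut_set C).
Proof.
  intros HA HC. destruct Hphi as [HP [Hi [Hs Hh]]].
  destruct (aut_set_spec C HC) as [HC1 EC].
  destruct (aut_is_line (line A C)) as [A2 [C2 [HA2 [HC2 E]]]]; [exists A, C; auto|].
  pose proof (star_line_line A C C HA HC HC) as B.
  apply (f_equal phi) in B; rewrite Hh, E, EC in B by (apply line_PI; auto).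
  destruct (star_line_nonzero (line A2 C2) (aut_set C) (aut_set C)) as [V _]; auto using line_PI;
    [rewrite B; apply line_neq_zero; auto|].
  apply saturated_line in V. subst; exists A2; auto.
Qed.

Lemma aut_line A C : nonempty A -> nonempty C -> phi (line A C) = line (aut_set A) (aut_set C).
Proof.
  intros HA HC. destruct Hphi as [HP [Hi [Hs Hh]]].
  destruct (aut_set_spec A HA) as [HA1 EA], (aut_set_spec C HC) as [HC1 _].
  destruct (aut_line_right A C HA HC) as [A2 [HA2 E2]].
  destruct (aut_line_right C A HC HA) as [C3 [HC3 E3]].
  pose proof (star_line_line A C A HA HC HA) as B.
  apply (f_equal phi) in B; rewrite Hh, E2, E3, EA in B by (apply line_PI; auto).
  destruct (star_line_nonzero (line A2 (aut_set C)) C3 (aut_set A)) as [V E]; auto using line_PI;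
    [rewrite B; apply line_neq_zero; auto|].
  apply saturated_line in V. subst C3. rewrite left_trace_line, B in E; auto.
  apply line_inj in E; auto. destruct E as [-> _]. auto.
Qed.

End Automorphism.

Definition aut_pair (phi phi' : Rel X -> Rel X) : Prop :=
  is_aut phi /\ is_aut phi' /\
  (forall a, PIstar a -> phi' (phi a) = a) /\ (forall b, PIstar b -> phi (phi' b) = b).

Lemma aut_pair_sym phi phi' : aut_pair phi phi' -> aut_pair phi' phi.
Proof. intros [H [H' [K K']]]; split; [exact H'|split; [exact H|split; assumption]]. Qed.

Lemma aut_pair_exists phi : is_aut phi -> exists phi', aut_pair phi phi'.
Proof.
  intros Hphi. pose proof Hphi as [HP [Hi [Hs Hh]]].
  set (phi' := fun b => epsilon (inhabits zero_rel) (fun a => PIstar a /\ phi a = b)).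
  assert (Sp : forall b, PIstar b -> PIstar (phi' b) /\ phi (phi' b) = b)
    by (intros b Hb; exact (epsilon_spec _ (fun a => PIstar a /\ phi a = b) (Hs b Hb))).
  assert (K : forall a, PIstar a -> phi' (phi a) = a).
  { intros a Ha. destruct (Sp (phi a) (HP a Ha)) as [H1 H2]. apply Hi; auto. }
  exists phi'; split; [auto|split; [|split; [auto|intros b Hb; apply Sp; auto]]].
  split; [|split; [|split]].
  - intros a Ha; apply Sp; auto.
  - intros a b Ha Hb E. rewrite <- (proj2 (Sp a Ha)), <- (proj2 (Sp b Hb)), E; auto.
  - intros b Hb. exists (phi b); split; auto.
  - intros a b Ha Hb. destruct (Sp a Ha) as [Pa Ea]; destruct (Sp b Hb) as [Pb Eb].
    rewrite <- (K (star (phi' a) (phi' b))) by (apply star_PI; auto).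
    rewrite Hh, Ea, Eb; auto.
Qed.

Lemma aut_set_K phi phi' C : aut_pair phi phi' -> nonempty C -> aut_set phi' (aut_set phi C) = C.
Proof.
  intros [H [H' [K _]]] HC.
  destruct (aut_set_spec phi H C HC) as [N1 E1].
  destruct (aut_set_spec phi' H' (aut_set phi C) N1) as [N2 E2].
  rewrite <- E1, K in E2 by (apply line_PI; auto).
  symmetry in E2. apply line_inj in E2; tauto.
Qed.

Lemma incl_alg_aut phi phi' D C : aut_pair phi phi' -> nonempty D -> nonempty C ->
  incl_alg D C -> incl_alg (aut_set phi D) (aut_set phi C).
Proof.
  intros P HD HC [Eq|[z [E [Hz [HE [HF [H1 [H2 N]]]]]]]]; [left; subst; auto|right].
  pose proof P as [H [H' _]]. pose proof H as [HP [_ [_ Hh]]].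
  exists (phi z), (aut_set phi E).
  split; [auto|split; [apply aut_set_spec; auto|split; [|split; [|split]]]].
  - intros F HF' NZ.
    set (F0 := aut_set phi' F).
    assert (HF0 : nonempty F0) by (apply aut_set_spec; auto).
    assert (EF : aut_set phi F0 = F) by (apply (aut_set_K phi' phi); auto using aut_pair_sym).
    rewrite <- EF, <- aut_line, <- Hh in NZ by (auto using line_PI).
    assert (NZ0 : star z (line F0 F0) <> zero_rel).
    { intros E0; apply NZ; rewrite E0; apply aut_zero; auto. }
    destruct (HF F0 HF0 NZ0) as [E0|[E0|E0]]; rewrite <- EF, E0; auto.
  - rewrite <- !aut_line, <- Hh, H1; auto using line_PI.
  - rewrite <- !aut_line, <- Hh, H2; auto using line_PI.
  - intros Eq. apply N. rewrite <- (aut_set_K phi phi' D), <- (aut_set_K phi phi' E), Eq; auto.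
Qed.

Lemma aut_set_incl phi phi' D C : aut_pair phi phi' -> nonempty D -> nonempty C ->
  (forall x, D x -> C x) -> forall x, aut_set phi D x -> aut_set phi C x.
Proof.
  intros P HD HC I. pose proof P as [H _].
  apply incl_alg_sound; try apply aut_set_spec; auto.
  apply (incl_alg_aut phi phi'); auto. apply incl_alg_complete; auto.
Qed.

Lemma eq_pred_inj (s t : X) : eq s = eq t -> s = t.
Proof. intros E. apply (f_equal (fun P : X -> Prop => P t)) in E. rewrite E; reflexivity. Qed.

(* An inclusion-preserving bijection of the nonempty sets maps singletons to singletons. *)
Lemma aut_set_singleton phi phi' y : aut_pair phi phi' -> exists t, aut_set phi (eq y) = eq t.
Proof.
  intros P. pose proof P as [H [H' _]]. pose proof (aut_pair_sym _ _ P) as P'.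
  assert (Hy : nonempty (eq y)) by (exists y; auto).
  destruct (aut_set_spec phi H (eq y) Hy) as [[t Ht] _].
  assert (Hty : nonempty (aut_set phi (eq y))) by (exists t; auto).
  assert (I : forall w, aut_set phi' (eq t) w -> y = w).
  { intros w Hw. rewrite <- (aut_set_K phi phi' (eq y) P Hy).
    apply (aut_set_incl phi' phi (eq t) (aut_set phi (eq y))); auto.
    - exists t; auto.
    - intros x <-; auto. }
  assert (Et : aut_set phi' (eq t) = eq y).
  { apply pred_ext; intros w; split; [apply I|intros <-].
    destruct (aut_set_spec phi' H' (eq t)) as [[w0 Hw0] _]; [exists t; auto|].
    rewrite (I w0 Hw0); auto. }
  exists t. rewrite <- Et. apply (aut_set_K phi' phi); auto. exists t; auto.
Qed.

Definition aut_perm phi (y : X) : X :=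
  epsilon (inhabits y) (fun t => aut_set phi (eq y) = eq t).

Lemma aut_perm_spec phi phi' y : aut_pair phi phi' -> aut_set phi (eq y) = eq (aut_perm phi y).
Proof.
  intros P. exact (epsilon_spec _ (fun t => aut_set phi (eq y) = eq t) (aut_set_singleton phi phi' y P)).
Qed.

Lemma aut_perm_K phi phi' y : aut_pair phi phi' -> aut_perm phi' (aut_perm phi y) = y.
Proof.
  intros P. apply eq_pred_inj.
  rewrite <- (aut_perm_spec phi' phi), <- (aut_perm_spec phi phi' y P); auto using aut_pair_sym.
  apply (aut_set_K phi phi'); auto. exists y; auto.
Qed.

Lemma aut_set_preimage phi phi' C : aut_pair phi phi' -> nonempty C ->
  aut_set phi C = fun w => C (aut_perm phi' w).
Proof.
  intros P HC. pose proof P as [H _]. pose proof (aut_pair_sym _ _ P) as P'.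
  apply pred_ext; intros w; split.
  - intros Hw. rewrite <- (aut_set_K phi phi' C P HC).
    apply (aut_set_incl phi' phi (eq w) (aut_set phi C)); auto.
    + exists w; auto.
    + apply aut_set_spec; auto.
    + intros x <-; auto.
    + rewrite (aut_perm_spec phi' phi w P'); reflexivity.
  - intros Cw. apply (aut_set_incl phi phi' (eq (aut_perm phi' w)) C); auto.
    + exists (aut_perm phi' w); auto.
    + intros x <-; auto.
    + rewrite (aut_perm_spec phi phi'), (aut_perm_K phi' phi); auto.
Qed.

Lemma aut_saturated phi phi' a C : aut_pair phi phi' -> PIstar a -> nonempty C ->
  (saturated (phi a) C <-> saturated a (fun y => C (aut_perm phi y))) /\
  (saturated (phi a) C ->
     left_trace (phi a) C = fun w => left_trace a (fun y => C (aut_perm phi y)) (aut_perm phi' w)).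
Proof.
  intros P Ha HC. pose proof P as [H _]. pose proof H as [HP [_ [_ Hh]]].
  pose proof (aut_pair_sym _ _ P) as P'.
  set (C0 := fun y => C (aut_perm phi y)).
  assert (HC0 : nonempty C0).
  { destruct HC as [y Hy]; exists (aut_perm phi' y); unfold C0; rewrite (aut_perm_K phi' phi); auto. }
  assert (SC0 : aut_set phi C0 = C).
  { rewrite (aut_set_preimage phi phi'); auto.
    apply pred_ext; intros w; unfold C0; rewrite (aut_perm_K phi' phi); tauto. }
  assert (EP : star (phi a) (line C C) = phi (star a (line C0 C0))).
  { rewrite Hh, (aut_line phi H), SC0; auto using line_PI. }
  destruct (classic (saturated a C0)) as [V|V].
  - assert (HL : nonempty (left_trace a C0)) by (apply left_trace_nonempty; auto).
    rewrite (star_line_saturated a C0 C0), (aut_line phi H), SC0 in EP; auto.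
    destruct (star_line_nonzero (phi a) C C) as [Vb Eb]; auto;
      [rewrite EP; apply line_neq_zero; auto; apply aut_set_spec; auto|].
    split; [tauto|intros _].
    rewrite EP in Eb. apply line_inj in Eb; auto using left_trace_nonempty; [|apply aut_set_spec; auto].
    destruct Eb as [Eb _]. rewrite <- Eb, (aut_set_preimage phi phi'); auto.
  - rewrite (star_line_unsaturated a C0 C0), aut_zero in EP; auto.
    assert (Vb : ~ saturated (phi a) C).
    { intros Vb. rewrite star_line_saturated in EP; auto.
      eapply line_neq_zero; [| |exact EP]; auto using left_trace_nonempty. }
    tauto.
Qed.

Lemma aut_relabel phi phi' a : aut_pair phi phi' -> PIstar a ->
  phi a = relabel (aut_perm phi') a.
Proof.
  intros P Ha. pose proof P as [[HP _] _].
  set (f := aut_perm phi); set (g := aut_perm phi').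
  assert (gf : forall x, g (f x) = x) by (intros; apply (aut_perm_K phi phi'); auto).
  assert (fg : forall x, f (g x) = x) by (intros; apply (aut_perm_K phi' phi); auto using aut_pair_sym).
  apply PI_ext_traces; [apply HP; auto|apply (relabel_PI g f fg gf); auto| |].
  - intros C. destruct (classic (nonempty C)) as [HC|HC].
    + rewrite (saturated_relabel f g gf fg). apply (aut_saturated phi phi'); auto.
    + split; intros [HC' _]; contradiction.
  - intros C V. rewrite (left_trace_relabel f g gf fg). apply (aut_saturated phi phi'); auto.
    apply V.
Qed.

Lemma aut_is_relabel phi : is_aut phi ->
  exists f g : X -> X, (forall x, g (f x) = x) /\ (forall x, f (g x) = x) /\
    forall a, PIstar a -> phi a = relabel g a.
Proof.
  intros Hphi. destruct (aut_pair_exists phi Hphi) as [phi' P].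
  exists (aut_perm phi), (aut_perm phi').
  split; [|split]; [intros x; apply (aut_perm_K phi phi')|intros x; apply (aut_perm_K phi' phi)|];
    auto using aut_pair_sym.
  intros a Ha. apply (aut_relabel phi phi'); auto.
Qed.

Lemma relabel_inj (f h : X -> X) : (forall a, PIstar a -> relabel f a = relabel h a) -> f = h.
Proof.
  intros E; apply functional_extensionality; intros x.
  assert (H : relabel f (line (eq (f x)) (eq (f x))) (inl x) (inr x)) by (right; split; reflexivity).
  rewrite E in H by (apply line_PI; exists (f x); auto).
  destruct H as [H|[H _]]; [discriminate|exact H].
Qed.

Definition perm_fun (p : Rel X) (x : X) : X := epsilon (inhabits x) (fun y => p (inl x) (inr y)).

Lemma perm_fun_perm_rel (f : X -> X) : perm_fun (perm_rel f) = f.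
Proof.
  apply functional_extensionality; intros x. unfold perm_fun.
  assert (K : forall y, perm_rel f (inl x) (inr y) <-> y = f x).
  { intros y; split.
    - intros [E|[x0 [[E1 E2]|[E1 E2]]]]; [discriminate| |discriminate].
      inversion E1; inversion E2; subst; auto.
    - intros ->; right; exists x; left; auto. }
  apply K, epsilon_spec. exists (f x); apply K; auto.
Qed.

End PIstar.

Theorem mainTheorem15 (X : Type) :
  (* Aut(PI*_X) ≅ S_X : an isomorphism Psi from S_X (with product star)
     onto Aut(PI*_X) (with composition, automorphisms identified when they
     agree on PI*_X) *)
  (exists Psi : Rel X -> (Rel X -> Rel X),
      (forall p, in_SX p -> is_aut (Psi p)) /\
      (forall p q, in_SX p -> in_SX q ->
         agree_on_PI (Psi (star p q)) (fun a => Psi p (Psi q a))) /\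
      (forall p q, in_SX p -> in_SX q -> agree_on_PI (Psi p) (Psi q) -> p = q) /\
      (forall phi, is_aut phi -> exists p, in_SX p /\ agree_on_PI phi (Psi p)))
  /\
  (* every automorphism is conjugation by an element pi of S_X *)
  (forall phi : Rel X -> Rel X, is_aut phi ->
     exists f g : X -> X,
       (forall x, g (f x) = x) /\ (forall x, f (g x) = x) /\
       forall a, PIstar a ->
         phi a = star (star (perm_rel g) a) (perm_rel f)).
Proof.
  split.
  - exists (fun p => relabel (perm_fun p)). split; [|split; [|split]].
    + intros p [f [g [gf [fg ->]]]]. rewrite perm_fun_perm_rel. apply (relabel_aut f g); auto.
    + intros p q [f [g [gf [fg ->]]]] [h [k [kh [hk ->]]]] a Ha.
      rewrite (perm_star f g h k), !perm_fun_perm_rel; auto. apply relabel_comp.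
    + intros p q [f [g [gf [fg ->]]]] [h [k [kh [hk ->]]]] E.
      rewrite !perm_fun_perm_rel in E. rewrite (relabel_inj f h E); auto.
    + intros phi Hphi. destruct (aut_is_relabel phi Hphi) as [f [g [gf [fg E]]]].
      exists (perm_rel g); split; [exists g, f; auto|].
      intros a Ha. rewrite perm_fun_perm_rel; auto.
  - intros phi Hphi. destruct (aut_is_relabel phi Hphi) as [f [g [gf [fg E]]]].
    exists f, g; split; [|split]; auto.
    intros a Ha. rewrite E, perm_conjugation; auto.
Qed.
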